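(* Let $N_0,B,T_c,G_c,p_r,p_d,p_s,C_0>0$ and $\alpha>1$, with $T=BT_c$ an integer greater than $1$, and let $R>0$. Set $\rho_r=\frac{G_cp_r}{N_0B}$, $\rho_d=\frac{G_cp_d}{N_0B}$, $\rho_s=\frac{G_cp_s}{N_0B}$, $\rho_0=\frac{G_cC_0}{N_0}$, $\Theta=(\alpha,\rho_r,\rho_d,\rho_s,\rho_0,T)$. Suppose $$\rho_r+2\rho_0\ \ge\ \frac{\alpha}{1+\lfloor\sqrt T\rfloor}+\frac{\alpha(1+\lfloor\sqrt T\rfloor)}{\lfloor\sqrt T\rfloor}\Big(2^{\frac{R}{1-\lfloor\sqrt T\rfloor/T}}-1\Big).$$ Let $\eta^\star_{zf}(R,\Theta)=\frac{G_c}{N_0}\zeta^\star_{zf}(R,\Theta)$ and $$e(R,\Theta)=\frac{RB}{2p_r+p_d+p_s+4C_0B+\frac{32}{3}\frac{C_0}{T_c}}.$$ Then $\frac23 e(R,\Theta)<\eta^\star_{zf}(R,\Theta)<e(R,\Theta)$.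
   Context: For $M>K$, $1\le K\le\tau<T$ let $$\gamma_u=\frac{K+\tau}{2\tau(M-K)}\Big(2^{\frac{R}{K(1-\tau/T)}}-1\Big)+\sqrt{\Big(\frac{K+\tau}{2\tau(M-K)}\Big(2^{\frac{R}{K(1-\tau/T)}}-1\Big)\Big)^2+\frac{2^{\frac{R}{K(1-\tau/T)}}-1}{\tau(M-K)}}$$ and define $\zeta_{zf}(M,K,\tau,R,\Theta)>0$ by $$\frac{R}{\zeta_{zf}(M,K,\tau,R,\Theta)}=\alpha K\gamma_u+\rho_s+K\Big(\rho_d+\frac{8K^2\rho_0}{3T}\Big)+M\Big(\rho_r+2K\rho_0+\frac{4K^2\rho_0}{T}\Big).$$ $\zeta^\star_{zf}(R,\Theta)$ is the maximum of $\zeta_{zf}$ over integers $(M,K,\tau)$ with $1\le K\le\tau<T$, $M>K$. *)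

From HB Require Import structures.
From mathcomp Require Import all_boot all_order all_algebra.
From mathcomp Require Import all_classical all_reals all_analysis.
Set Implicit Arguments. Unset Strict Implicit. Unset Printing Implicit Defensive.
Import Order.TTheory GRing.Theory Num.Theory.
Local Open Scope ring_scope.
Local Open Scope classical_set_scope.

Section Defs.
Variable R : realType.

Definition snr_term (Rt : R) (K tau : nat) (T : R) : R :=
  2 `^ (Rt / (K%:R * (1 - tau%:R / T))) - 1.

Definition gamma_u (M K tau : nat) (Rt T : R) : R :=
  let a := (K%:R + tau%:R) / (2 * tau%:R * (M%:R - K%:R)) * snr_term Rt K tau T in
  a + Num.sqrt (a ^+ 2 + snr_term Rt K tau T / (tau%:R * (M%:R - K%:R))).

Definition zeta_zf (M K tau : nat) (Rt alpha rho_r rho_d rho_s rho_0 T : R) : R :=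
  Rt / (alpha * K%:R * gamma_u M K tau Rt T + rho_s
        + K%:R * (rho_d + 8 * K%:R ^+ 2 * rho_0 / (3 * T))
        + M%:R * (rho_r + 2 * K%:R * rho_0 + 4 * K%:R ^+ 2 * rho_0 / T)).

Definition admissible (M K tau T : nat) : Prop :=
  (1 <= K)%N /\ (K <= tau)%N /\ (tau < T)%N /\ (K < M)%N.

(* zeta*_zf: the maximum of zeta_zf over admissible triples, written as the
   supremum of the set of attained values. *)
Definition zeta_star (Rt alpha rho_r rho_d rho_s rho_0 : R) (T : nat) : R :=
  sup [set z : R | exists M K tau : nat, admissible M K tau T /\
        z = zeta_zf M K tau Rt alpha rho_r rho_d rho_s rho_0 T%:R].

End Defs.

From HB Require Import structures.
From mathcomp Require Import all_boot all_order all_algebra.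
From mathcomp Require Import all_classical all_reals all_analysis.
From mathcomp Require Import ring lra.
Import Order.TTheory GRing.Theory Num.Theory.
Local Open Scope ring_scope.
Set Implicit Arguments. Unset Strict Implicit. Unset Printing Implicit Defensive.

(* The denominator [zf_power] of [zeta_zf] is at least [zf_power_floor], its value
   at [(M, K) = (2, 1)] with the [gamma_u] term dropped, and
   [e = Gc / N0 * (Rt / zf_power_floor)].  Every admissible triple exceeds this floor
   by a margin bounded away from zero: [M >= 3] costs an extra [rho_r], and
   [gamma_u 2 1 tau >= (2^Rt - 1) / 2] for all [tau]; hence [eta_star < e].
   Conversely [gamma_u 2 1 tau <= 1 / (1 + tau) + (1 + tau) / tau * (2^(Rt/(1 - tau/T)) - 1)],
   so at [tau = floor (sqrt T)] the hypothesis gives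
   [alpha * gamma_u <= rho_r + 2 rho_0 < zf_power_floor / 2], i.e. the triple
   [(2, 1, tau)] already reaches more than [2/3] of [Rt / zf_power_floor]. *)

Lemma sqrt_sqrD_mul_le (R : rcfType) (a c : R) : 0 <= a + c ->
  Num.sqrt (a ^+ 2 + 2 * a * c) <= a + c.
Proof.
move=> hac; rewrite -[leRHS]ger0_norm // -sqrtr_sqr ler_sqrt ?sqr_ge0 //.
by rewrite sqrrD -mulr_natl; have := sqr_ge0 c; lra.
Qed.

Lemma powR_gt1 (R : realType) (a x : R) : 1 < a -> 0 < x -> 1 < a `^ x.
Proof.
move=> ha hx; rewrite /powR gt_eqF ?(lt_trans ltr01) //.
by rewrite expR_gt1 mulr_gt0 // ln_gt0.
Qed.

Lemma sqrtr_lt_id (R : rcfType) (x : R) : 1 < x -> Num.sqrt x < x.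
Proof.
move=> hx; have hx0 : 0 <= x by rewrite ltW // (lt_trans ltr01).
have hs : 1 < Num.sqrt x by rewrite -sqrtr1 ltr_sqrt // (lt_trans ltr01).
by rewrite -{2}(sqr_sqrtr hx0) expr2 ltr_pMr // (lt_trans ltr01).
Qed.

Lemma truncn_sqrt_nat_bounds (R : realType) (n : nat) : (1 < n)%N ->
  (0 < Num.truncn (Num.sqrt (n%:R : R)) < n)%N.
Proof.
move=> hn; have hn1 : 1 < n%:R :> R by rewrite ltr1n.
rewrite truncn_gt0 truncn_lt_nat ?sqrtr_ge0 ?sqrtr_lt_id // andbT.
by rewrite -{1}sqrtr1 ler_sqrt // ltW.
Qed.

Lemma intr_floor_truncn (R : archiRealDomainType) (x : R) : 0 <= x ->
  (Num.floor x)%:~R = (Num.truncn x)%:R :> R.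
Proof. by move=> hx; rewrite truncn_floor hx natr_absz ger0_norm ?floor_ge0. Qed.

Section GammaBounds.
Variables (R : realType) (Rt T : R).
Hypothesis hRt : 0 <= Rt.

Lemma snr_term_ge0 K tau : tau%:R < T -> 0 <= snr_term Rt K tau T.
Proof.
move=> htT; have hT : 0 < T by apply: le_lt_trans htT.
have hfrac : 0 < 1 - tau%:R / T by rewrite subr_gt0 ltr_pdivrMr // mul1r.
rewrite /snr_term subr_ge0 -[leLHS](powRr0 2).
by apply: ler_powR; rewrite ?ler1n // divr_ge0 // mulr_ge0 // ltW.
Qed.

Lemma snr_term_1_ge tau : tau%:R < T -> 2 `^ Rt - 1 <= snr_term Rt 1 tau T.
Proof.
move=> htT; have hT : 0 < T by apply: le_lt_trans htT.
have hfrac : 0 < 1 - tau%:R / T by rewrite subr_gt0 ltr_pdivrMr // mul1r.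
have hfrac1 : 1 - tau%:R / T <= 1 by rewrite gerBl divr_ge0 // ltW.
rewrite /snr_term lerD2r mul1r; apply: ler_powR; first by rewrite ler1n.
by rewrite ler_pdivlMr // ler_piMr.
Qed.

Lemma gamma_u_ge0 M K tau : (K < M)%N -> tau%:R < T -> 0 <= gamma_u M K tau Rt T.
Proof.
move=> hKM htT; have hMK : 0 < M%:R - K%:R :> R by rewrite subr_gt0 ltr_nat.
rewrite /gamma_u addr_ge0 ?sqrtr_ge0 // mulr_ge0 ?snr_term_ge0 //.
by rewrite divr_ge0 ?addr_ge0 // !mulr_ge0 // ltW.
Qed.

Lemma gamma_u_21_ge tau : (1 <= tau)%N -> tau%:R < T ->
  (2 `^ Rt - 1) / 2 <= gamma_u 2 1 tau Rt T.
Proof.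
move=> htau htT; have ht : 1 <= tau%:R :> R by rewrite ler1n.
have hx := snr_term_1_ge htT; have hx0 := snr_term_ge0 1 htT.
rewrite /gamma_u (_ : 2%:R - 1%:R = 1 :> R); last by rewrite -natrB.
set x := snr_term Rt 1 tau T in hx hx0 *.
have -> : (1%:R + tau%:R) / (2 * tau%:R * 1) * x = x / 2 + x / (2 * tau%:R).
  by field; lra.
have := sqrtr_ge0 ((x / 2 + x / (2 * tau%:R)) ^+ 2 + x / (tau%:R * 1)).
have : 0 <= x / (2 * tau%:R) by rewrite divr_ge0 //; lra.
lra.
Qed.

Lemma gamma_u_21_le tau : (1 <= tau)%N -> tau%:R < T ->
  gamma_u 2 1 tau Rt T
    <= 1 / (1 + tau%:R) + (1 + tau%:R) / tau%:R * (2 `^ (Rt / (1 - tau%:R / T)) - 1).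
Proof.
move=> htau htT; have ht : 1 <= tau%:R :> R by rewrite ler1n.
have hx0 := snr_term_ge0 1 htT.
have -> : 2 `^ (Rt / (1 - tau%:R / T)) - 1 = snr_term Rt 1 tau T.
  by rewrite /snr_term mul1r.
rewrite /gamma_u (_ : 2%:R - 1%:R = 1 :> R); last by rewrite -natrB.
set x := snr_term Rt 1 tau T in hx0 *.
set a := (1%:R + tau%:R) / (2 * tau%:R * 1) * x.
set c := 1 / (1 + tau%:R).
(* the radicand is [a^2 + 2 a c] exactly, whence [gamma <= 2 a + c] *)
have -> : x / (tau%:R * 1) = 2 * a * c by rewrite /a /c; field; lra.
have -> : (1 + tau%:R) / tau%:R * x = 2 * a by rewrite /a; field; lra.
have ha : 0 <= a by rewrite mulr_ge0 // divr_ge0; lra.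
have hc : 0 <= c by rewrite divr_ge0; lra.
have := sqrt_sqrD_mul_le (addr_ge0 ha hc); lra.
Qed.

End GammaBounds.

Section ZeroForcingPower.
Variables (R : realType) (Rt alpha rho_r rho_d rho_s rho_0 : R) (T : nat).
Hypotheses (hRt : 0 < Rt) (halpha : 0 < alpha) (hr : 0 < rho_r) (hd : 0 < rho_d)
  (hs : 0 < rho_s) (h0 : 0 < rho_0) (hT : (1 < T)%N).

Definition zf_power M K tau : R :=
  alpha * K%:R * gamma_u M K tau Rt T%:R + rho_s
  + K%:R * (rho_d + 8 * K%:R ^+ 2 * rho_0 / (3 * T%:R))
  + M%:R * (rho_r + 2 * K%:R * rho_0 + 4 * K%:R ^+ 2 * rho_0 / T%:R).

Definition zf_power_floor : R :=
  2 * rho_r + rho_d + rho_s + 4 * rho_0 + 32 / 3 * (rho_0 / T%:R).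

Definition zeta_zf_values : set R :=
  [set z | exists M K tau, admissible M K tau T /\
                           z = zeta_zf M K tau Rt alpha rho_r rho_d rho_s rho_0 T%:R].

Lemma zeta_zfE M K tau :
  zeta_zf M K tau Rt alpha rho_r rho_d rho_s rho_0 T%:R = Rt / zf_power M K tau.
Proof. by []. Qed.

Lemma zeta_starE : zeta_star Rt alpha rho_r rho_d rho_s rho_0 T = sup zeta_zf_values.
Proof. by []. Qed.

Let hTr : 0 < T%:R :> R. Proof. by rewrite ltr0n ltnW. Qed.

(* [lra] ignores section hypotheses, hence the [move:] before each call. *)
Lemma zf_power_floor_gt0 : 0 < zf_power_floor.
Proof. have := divr_gt0 h0 hTr; move: hr hd hs h0; rewrite /zf_power_floor; lra. Qed.

Lemma zf_power_21 tau :
  zf_power 2 1 tau = zf_power_floor + alpha * gamma_u 2 1 tau Rt T%:R.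
Proof. by rewrite /zf_power /zf_power_floor; field; rewrite gt_eqF. Qed.

Lemma zf_power_ge M K tau : (1 <= K)%N -> (K < M)%N ->
  zf_power_floor + alpha * K%:R * gamma_u M K tau Rt T%:R + (M%:R - 2) * rho_r
    <= zf_power M K tau.
Proof.
move=> hK hKM; have hk : 1 <= K%:R :> R by rewrite ler1n.
have hm : K%:R + 1 <= M%:R :> R by rewrite natr1 ler_nat.
rewrite /zf_power /zf_power_floor.
set k := K%:R in hk hm *; set m := M%:R in hm *; set r := rho_0 / T%:R.
have hr0 : 0 < r by rewrite divr_gt0.
have -> : k * (rho_d + 8 * k ^+ 2 * rho_0 / (3 * T%:R)) = k * rho_d + 8 / 3 * (k ^+ 3 * r).
  by rewrite /r; field; rewrite gt_eqF.
have -> : m * (rho_r + 2 * k * rho_0 + 4 * k ^+ 2 * rho_0 / T%:R)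
    = m * rho_r + 2 * (m * k * rho_0) + 4 * (m * k ^+ 2 * r).
  by rewrite /r; field; rewrite gt_eqF.
have hk2 : 1 <= k ^+ 2 := exprn_ege1 2 hk.
have hmk : 2 <= m * k by nra.
have hmk2 : 2 <= m * k ^+ 2 by nra.
have hd1 : rho_d <= k * rho_d := ler_peMl (ltW hd) hk.
have h01 : 2 * rho_0 <= m * k * rho_0 := ler_wpM2r (ltW h0) hmk.
have hr1 : r <= k ^+ 3 * r := ler_peMl (ltW hr0) (exprn_ege1 3 hk).
have hr2 : 2 * r <= m * k ^+ 2 * r := ler_wpM2r (ltW hr0) hmk2.
lra.
Qed.

Lemma zf_power_gap : exists2 del, 0 < del &
  forall M K tau, admissible M K tau T -> zf_power_floor + del <= zf_power M K tau.
Proof.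
have hc : 0 < alpha * ((2 `^ Rt - 1) / 2).
  by rewrite mulr_gt0 // divr_gt0 // subr_gt0 powR_gt1 // ltr1n.
exists (Num.min rho_r (alpha * ((2 `^ Rt - 1) / 2))); first by rewrite lt_min hr.
move=> M K tau [hK [hKtau [htauT hKM]]].
have htau : (1 <= tau)%N := leq_trans hK hKtau.
have htauT' : tau%:R < T%:R :> R by rewrite ltr_nat.
apply: le_trans (zf_power_ge tau hK hKM).
have hg : 0 <= alpha * K%:R * gamma_u M K tau Rt T%:R.
  by rewrite !mulr_ge0 ?ler0n ?gamma_u_ge0 // ltW.
case: (ltnP 2 M) => hM.
  have hM3 : 3 <= M%:R :> R by rewrite ler_nat.
  have : Num.min rho_r (alpha * ((2 `^ Rt - 1) / 2)) <= rho_r by rewrite ge_min lexx.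
  move: hr; nra.
have eM : M = 2%N by apply/eqP; rewrite eqn_leq hM; apply: leq_ltn_trans hKM.
have eK : K = 1%N by apply/eqP; rewrite eqn_leq hK andbT -ltnS -eM.
subst M K; rewrite subrr mul0r addr0 mulr1.
have : alpha * ((2 `^ Rt - 1) / 2) <= alpha * gamma_u 2 1 tau Rt T%:R.
  by rewrite ler_wpM2l ?gamma_u_21_ge // ltW.
have : Num.min rho_r (alpha * ((2 `^ Rt - 1) / 2)) <= alpha * ((2 `^ Rt - 1) / 2).
  by rewrite ge_min lexx orbT.
lra.
Qed.

Lemma zf_power_21_lt tau : alpha * gamma_u 2 1 tau Rt T%:R <= rho_r + 2 * rho_0 ->
  2 / 3 * zf_power 2 1 tau < zf_power_floor.
Proof.
have := divr_gt0 h0 hTr; move: hd hs.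
by rewrite zf_power_21 /zf_power_floor; lra.
Qed.

Lemma zeta_zf_values_ubound : exists2 del, 0 < del &
  ubound zeta_zf_values (Rt / (zf_power_floor + del)).
Proof.
have [del hdel hgap] := zf_power_gap; exists del => // _ [M [K [tau [hMKtau ->]]]].
have hpos : 0 < zf_power_floor + del := addr_gt0 zf_power_floor_gt0 hdel.
rewrite zeta_zfE ler_pM2l // lef_pV2 ?posrE ?hgap //.
exact: lt_le_trans hpos (hgap _ _ _ hMKtau).
Qed.

Lemma zeta_star_bounds tau : (0 < tau < T)%N ->
    alpha * gamma_u 2 1 tau Rt T%:R <= rho_r + 2 * rho_0 ->
  2 / 3 * (Rt / zf_power_floor) < zeta_star Rt alpha rho_r rho_d rho_s rho_0 T
  /\ zeta_star Rt alpha rho_r rho_d rho_s rho_0 T < Rt / zf_power_floor.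
Proof.
move=> /andP[htau htauT] hgamma; have hfloor := zf_power_floor_gt0.
have [del hdel hub] := zeta_zf_values_ubound.
have h21 : zeta_zf_values (zeta_zf 2 1 tau Rt alpha rho_r rho_d rho_s rho_0 T%:R).
  by exists 2%N, 1%N, tau.
rewrite zeta_starE; split.
  apply: lt_le_trans (ub_le_sup _ h21); last by exists (Rt / (zf_power_floor + del)).
  have h21_gt0 : 0 < zf_power 2 1 tau.
    apply: lt_le_trans hfloor _.
    by rewrite zf_power_21 lerDl mulr_ge0 ?gamma_u_ge0 ?ltr_nat // ltW.
  rewrite zeta_zfE -[_ * (Rt / _)]mulrCA -invf_div ltr_pM2l // ltf_pV2 ?posrE //.
    by rewrite ltr_pdivlMr ?divr_gt0 // mulrC; exact: zf_power_21_lt.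
  by rewrite !divr_gt0.
apply: le_lt_trans (ge_sup (ex_intro _ _ h21) hub) _.
by rewrite ltr_pM2l // ltf_pV2 ?posrE ?(addr_gt0 hfloor hdel) // ltrDl.
Qed.

End ZeroForcingPower.

Theorem theorem3 (R : realType) (N0 B Tc Gc pr pd ps C0 alpha Rt : R) (T : nat)
  (hN0 : 0 < N0) (hB : 0 < B) (hTc : 0 < Tc) (hGc : 0 < Gc) (hpr : 0 < pr)
  (hpd : 0 < pd) (hps : 0 < ps) (hC0 : 0 < C0) (halpha : 1 < alpha)
  (hT : T%:R = B * Tc) (hT1 : (1 < T)%N) (hR : 0 < Rt)
  (hcond : let rho_r := Gc * pr / (N0 * B) in
           let rho_0 := Gc * C0 / N0 in
           let s : R := (Num.floor (Num.sqrt (T%:R : R)))%:~R in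
           rho_r + 2 * rho_0 >=
             alpha / (1 + s)
             + alpha * (1 + s) / s * (2 `^ (Rt / (1 - s / T%:R)) - 1)) :
  let rho_r := Gc * pr / (N0 * B) in
  let rho_d := Gc * pd / (N0 * B) in
  let rho_s := Gc * ps / (N0 * B) in
  let rho_0 := Gc * C0 / N0 in
  let eta_star := Gc / N0 * zeta_star Rt alpha rho_r rho_d rho_s rho_0 T in
  let e := Rt * B / (2 * pr + pd + ps + 4 * C0 * B + 32 / 3 * (C0 / Tc)) in
  2 / 3 * e < eta_star /\ eta_star < e.
Proof.
move=> rho_r rho_d rho_s rho_0 eta_star e; cbv zeta in hcond.
have hpos p : 0 < p -> 0 < Gc * p / (N0 * B) by move=> hp; rewrite divr_gt0 ?mulr_gt0.
have halpha0 : 0 < alpha := lt_trans ltr01 halpha.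
have h0 : 0 < rho_0 by rewrite divr_gt0 ?mulr_gt0.
have he : e = Gc / N0 * (Rt / zf_power_floor rho_r rho_d rho_s rho_0 T).
  rewrite /e /zf_power_floor hT /rho_r /rho_d /rho_s /rho_0.
  by field; rewrite !gt_eqF // !(addr_gt0, mulr_gt0, divr_gt0).
set tau := Num.truncn (Num.sqrt (T%:R : R)).
have htau : (0 < tau < T)%N := truncn_sqrt_nat_bounds R hT1.
rewrite intr_floor_truncn ?sqrtr_ge0 // -/tau in hcond.
have hgamma : alpha * gamma_u 2 1 tau Rt T%:R <= rho_r + 2 * rho_0.
  have [htau0 htauT] := andP htau.
  apply: le_trans hcond.
  set X := 2 `^ _ - 1.
  have -> : alpha / (1 + tau%:R) + alpha * (1 + tau%:R) / tau%:R * X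
      = alpha * (1 / (1 + tau%:R) + (1 + tau%:R) / tau%:R * X) by ring.
  by rewrite ler_wpM2l ?(ltW halpha0) // gamma_u_21_le ?ltr_nat ?ltW.
have [hlow hup] := zeta_star_bounds hR halpha0 (hpos _ hpr) (hpos _ hpd) (hpos _ hps) h0 hT1
  htau hgamma.
have hGN : 0 < Gc / N0 by rewrite divr_gt0.
by rewrite /eta_star he mulrCA !ltr_pM2l.
Qed.
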